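(* Let $R$ and $S$ be bornological $V$-algebras. Then $(R\otimes S)^{\mathrm{lg}}=R^{\mathrm{lg}}\otimes S^{\mathrm{lg}}$ as bornological algebras, and hence $\overline{R\otimes S}^{\mathrm{lg}}\cong\overline R^{\mathrm{lg}}\hat\otimes\overline S^{\mathrm{lg}}$.
   Context: $V$ complete DVR, uniformizer $\pi$, $|\pi|=\epsilon\in(0,1)$; tensor products over $V$. Convex bornologies (bounded sets contain finite sets, closed under subsets, finite unions and generated $V$-submodules). The bornological tensor product $X\otimes Y$ of bornological $V$-modules is the algebraic tensor product with bornology generated by the images of $S\otimes T$ for bounded submodules $S,T$; $\hat\otimes$ is its completion (complete = bounded $\pi$-adically complete separated submodules cofinal; completion = universal bounded map to a complete module). For a bounded $V$-submodule $M$ of a bornological $V$-algebra, ''$\varrho(M)\le1$'' means $\sum_{n\ge0}\pi^{\lceil\log_\epsilon(r^{-n})\rceil}M^n$ bounded for all $r>1$. The linear growth bornology ${}^{\mathrm{lg}}$ on a bornological $V$-algebra is the smallest algebra bornology containing the given one in which every bounded $V$-submodule has $\varrho\le1$; $\overline{(\cdot)}^{\mathrm{lg}}$ is the completion for it. *)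

From HB Require Import structures.
From mathcomp Require Import all_boot all_order all_algebra.
From Stdlib Require Rdefinitions Raxioms R_Ifp Rpower Rpow_def.
Set Implicit Arguments. Unset Strict Implicit. Unset Printing Implicit Defensive.
Import GRing.Theory.
Local Open Scope ring_scope.

Definition is_dvr_uniformizer (V : idomainType) (pi : V) : Prop :=
  pi != 0 /\ pi \isn't a GRing.unit /\
  forall x : V, x != 0 -> exists (u : V) (n : nat), u \is a GRing.unit /\ x = u * pi ^+ n.

Definition is_pi_adically_complete_ring (V : idomainType) (pi : V) : Prop :=
  forall a : nat -> V, exists x : V,
    forall n : nat, exists y : V, x - \sum_(k < n) a k * pi ^+ k = pi ^+ n * y.

Definition incl (X : Type) (A B : X -> Prop) : Prop := forall x, A x -> B x.

Inductive span (V : pzRingType) (X : lmodType V) (A : X -> Prop) : X -> Prop :=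
| span_zero : span A 0
| span_in x : A x -> span A x
| span_add x y : span A x -> span A y -> span A (x + y)
| span_scale (a : V) x : span A x -> span A (a *: x).

Definition is_submod (V : pzRingType) (X : lmodType V) (M : X -> Prop) : Prop :=
  M 0 /\ (forall x y, M x -> M y -> M (x + y)) /\ (forall (a : V) x, M x -> M (a *: x)).

Definition image (X Y : Type) (f : X -> Y) (A : X -> Prop) : Y -> Prop :=
  fun y => exists x, A x /\ y = f x.

Definition is_linear (V : pzRingType) (X Y : lmodType V) (f : X -> Y) : Prop :=
  forall (a : V) u v, f (a *: u + v) = a *: f u + f v.

Definition is_bilinear (V : pzRingType) (X Y Z : lmodType V) (f : X -> Y -> Z) : Prop :=
  (forall x, is_linear (f x)) /\ (forall y, is_linear (fun x => f x y)).

Definition is_convex_bornology (V : pzRingType) (X : lmodType V)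
    (B : (X -> Prop) -> Prop) : Prop :=
  (forall A : X -> Prop, (exists s : seq X, forall x, A x -> x \in s) -> B A) /\
  (forall A A', B A -> incl A' A -> B A') /\
  (forall A A', B A -> B A' -> B (fun x => A x \/ A' x)) /\
  (forall A, B A -> B (span A)).

Definition setmul (V : pzRingType) (R : algType V) (A A' : R -> Prop) : R -> Prop :=
  fun x => exists a b, A a /\ A' b /\ x = a * b.

Definition is_alg_bornology (V : pzRingType) (R : algType V)
    (B : (R -> Prop) -> Prop) : Prop :=
  is_convex_bornology B /\ (forall A A', B A -> B A' -> B (setmul A A')).

Definition bounded_map (V : pzRingType) (X Y : lmodType V)
    (BX : (X -> Prop) -> Prop) (BY : (Y -> Prop) -> Prop) (f : X -> Y) : Prop :=
  forall A, BX A -> BY (image f A).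

Fixpoint mpow (V : pzRingType) (R : algType V) (M : R -> Prop) (n : nat) : R -> Prop :=
  match n with
  | 0 => span (fun x => x = 1)
  | n'.+1 => span (setmul (mpow M n') M)
  end.

Definition pimul (V : pzRingType) (X : lmodType V) (pi : V) (k : nat) (M : X -> Prop)
    : X -> Prop := fun x => exists y, M y /\ x = pi ^+ k *: y.

Definition Rceil (x : Rdefinitions.R) : BinNums.Z :=
  BinInt.Z.opp (R_Ifp.Int_part (Rdefinitions.Ropp x)).

(* ceil(log_eps(r^(-n))) as a natural number *)
Definition lg_exp (eps r : Rdefinitions.R) (n : nat) : nat :=
  BinInt.Z.to_nat (Rceil (Rdefinitions.Rdiv
     (Rpower.ln (Rdefinitions.Rinv (Rpow_def.pow r n))) (Rpower.ln eps))).

Definition rho_le1 (V : pzRingType) (R : algType V) (pi : V) (eps : Rdefinitions.R)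
    (B : (R -> Prop) -> Prop) (M : R -> Prop) : Prop :=
  forall r : Rdefinitions.R, Rdefinitions.Rlt (Rdefinitions.IZR (BinNums.Zpos BinNums.xH)) r ->
    B (span (fun x => exists n : nat, pimul pi (lg_exp eps r n) (mpow M n) x)).

Definition lg_bornology (V : pzRingType) (R : algType V) (pi : V) (eps : Rdefinitions.R)
    (B : (R -> Prop) -> Prop) : (R -> Prop) -> Prop :=
  fun A => forall B' : (R -> Prop) -> Prop,
    is_alg_bornology B' -> (forall A0, B A0 -> B' A0) ->
    (forall M, is_submod M -> B' M -> rho_le1 pi eps B' M) -> B' A.

Definition is_tensor_product (V : pzRingType) (X Y T : lmodType V) (t : X -> Y -> T) : Prop :=
  is_bilinear t /\
  forall (W : lmodType V) (f : X -> Y -> W), is_bilinear f ->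
    exists g : T -> W, is_linear g /\ (forall x y, g (t x y) = f x y) /\
      (forall g' : T -> W, is_linear g' -> (forall x y, g' (t x y) = f x y) ->
         forall z, g' z = g z).

Definition is_tensor_algebra (V : pzRingType) (R S T : algType V) (t : R -> S -> T) : Prop :=
  is_tensor_product t /\ t 1 1 = 1 /\
  (forall r r' s s', t r s * t r' s' = t (r * r') (s * s')).

Definition tensor_bornology (V : pzRingType) (X Y T : lmodType V)
    (BX : (X -> Prop) -> Prop) (BY : (Y -> Prop) -> Prop) (t : X -> Y -> T)
    : (T -> Prop) -> Prop :=
  fun A => forall B' : (T -> Prop) -> Prop, is_convex_bornology B' ->
    (forall S U, is_submod S -> BX S -> is_submod U -> BY U ->
       B' (span (fun z => exists s u, S s /\ U u /\ z = t s u))) -> B' A.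

Definition pi_complete_separated (V : pzRingType) (X : lmodType V) (pi : V)
    (M : X -> Prop) : Prop :=
  (forall x, M x -> (forall n, exists y, M y /\ x = pi ^+ n *: y) -> x = 0) /\
  (forall s : nat -> X, (forall n, M (s n)) ->
     (forall n, exists y, M y /\ s n.+1 - s n = pi ^+ n *: y) ->
     exists x, M x /\ forall n, exists y, M y /\ x - s n = pi ^+ n *: y).

Definition is_complete (V : pzRingType) (X : lmodType V) (pi : V)
    (B : (X -> Prop) -> Prop) : Prop :=
  forall A, B A -> exists M, is_submod M /\ B M /\ incl A M /\ pi_complete_separated pi M.

Definition is_completion (V : pzRingType) (X C : lmodType V) (pi : V)
    (BX : (X -> Prop) -> Prop) (BC : (C -> Prop) -> Prop) (j : X -> C) : Prop :=
  is_convex_bornology BC /\ is_complete pi BC /\ is_linear j /\ bounded_map BX BC j /\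
  forall (W : lmodType V) (BW : (W -> Prop) -> Prop) (f : X -> W),
    is_convex_bornology BW -> is_complete pi BW -> is_linear f -> bounded_map BX BW f ->
    exists g : C -> W, is_linear g /\ bounded_map BC BW g /\ (forall x, g (j x) = f x) /\
      (forall g' : C -> W, is_linear g' -> bounded_map BC BW g' ->
         (forall x, g' (j x) = f x) -> forall z, g' z = g z).

Definition is_alg_hom (V : pzRingType) (R S : algType V) (f : R -> S) : Prop :=
  is_linear f /\ f 1 = 1 /\ (forall x y, f (x * y) = f x * f y).

Definition is_alg_completion (V : pzRingType) (R C : algType V) (pi : V)
    (BR : (R -> Prop) -> Prop) (BC : (C -> Prop) -> Prop) (j : R -> C) : Prop :=
  is_alg_bornology BC /\ is_alg_hom j /\ is_completion pi BR BC j.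

(* Both bornologies on R (x) S are defined by minimality, so each inclusion amounts to
   checking that one of them has the defining properties of the other. The maps
   r |-> r (x) 1 and s |-> 1 (x) s are bounded algebra homomorphisms, hence remain bounded
   for the linear growth bornologies, and r (x) s is their product: so lg(R) (x) lg(S) lies
   in lg(R (x) S). Conversely lg(R) (x) lg(S) is an algebra bornology containing R (x) S in
   which every bounded submodule M has rho(M) <= 1: M lies in the span of S (x) U with S, U
   bounded, so M^n lies in the span of S^n (x) U^n, and the weight pi^(e n) required at a
   radius r splits into two weights pi^(a n) of a smaller radius, as 2 a n <= e n for large n.
   The two completions then satisfy the same universal property. The one non-formal point is
   that a jointly bounded bilinear map extends to the completion of one factor; this follows
   by viewing it as a bounded linear map into the complete module of bounded functions on a
   bounded subset of the other factor. *)

From Pilot Require Import Defs.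
From Stdlib Require Import Reals Lra Lia ZArith.

Local Open Scope R_scope.

Lemma Rceil_bounds (y : R) : y <= IZR (Rceil y) < y + 1.
Proof.
unfold Rceil; destruct (base_Int_part (- y)) as [h1 h2].
rewrite opp_IZR; lra.
Qed.

Lemma lg_exp_linear (eps r : R) (n : nat) : 0 < eps -> eps < 1 -> 1 < r ->
  lg_exp eps r n = Z.to_nat (Rceil (INR n * (ln r / - ln eps))).
Proof.
intros h0 h1 hr; unfold lg_exp; f_equal; f_equal.
assert (hl : ln eps < 0) by (rewrite <- ln_1; apply ln_increasing; lra).
rewrite ln_Rinv by (apply pow_lt; lra).
rewrite ln_pow by lra; field; lra.
Qed.

(* Take r1 = r^(1/4): the exponents become ceil(x/4) and ceil(x) with x growing linearly in n,
   and 2 ceil(x/4) <= ceil(x) as soon as x >= 4. *)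
Lemma lg_exp_double_le (eps r : R) : 0 < eps -> eps < 1 -> 1 < r ->
  exists r1, 1 < r1 /\ exists N : nat, forall n : nat, (N <= n)%nat ->
    (2 * lg_exp eps r1 n <= lg_exp eps r n)%nat.
Proof.
intros h0 h1 hr.
assert (hl : ln eps < 0) by (rewrite <- ln_1; apply ln_increasing; lra).
assert (hlr : 0 < ln r) by (rewrite <- ln_1; apply ln_increasing; lra).
set (k := ln r / - ln eps).
assert (hk : 0 < k) by (unfold k; apply Rdiv_lt_0_compat; lra).
assert (hr1 : 1 < exp (ln r / 4)) by (rewrite <- exp_0; apply exp_increasing; lra).
exists (exp (ln r / 4)); split; [exact hr1|].
destruct (archimed (4 / k)) as [hy _].
assert (hup : (0 <= up (4 / k))%Z).
{ apply le_IZR; assert (0 < 4 / k) by (apply Rdiv_lt_0_compat; lra); lra. }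
exists (Z.to_nat (up (4 / k))); intros n hn.
rewrite (lg_exp_linear _ _ n h0 h1 hr1), (lg_exp_linear _ _ n h0 h1 hr), ln_exp.
set (x := INR n * k).
assert (hx : 4 <= x).
{ assert (IZR (up (4 / k)) <= INR n).
  { rewrite <- (Z2Nat.id (up (4 / k))) by lia; rewrite <- INR_IZR_INZ; apply le_INR; exact hn. }
  assert (4 / k * k <= INR n * k) by (apply Rmult_le_compat_r; lra).
  unfold x; replace 4 with (4 / k * k) at 1 by (field; lra); lra. }
replace (INR n * (ln r / 4 / - ln eps)) with (x / 4) by (unfold x, k; field; lra).
destruct (Rceil_bounds (x / 4)) as [a1 a2]; destruct (Rceil_bounds x) as [b1 b2].
assert (hc : (2 * Rceil (x / 4) <= Rceil x)%Z) by (apply le_IZR; rewrite mult_IZR; lra).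
assert (hc0 : (0 <= Rceil (x / 4))%Z) by (apply le_IZR; lra).
change (INR n * (ln r / - ln eps)) with x; lia.
Qed.

Local Close Scope R_scope.

From HB Require Import structures.
From mathcomp Require Import all_boot all_order all_algebra.
From mathcomp Require Import boolp functions.
Set Implicit Arguments. Unset Strict Implicit. Unset Printing Implicit Defensive.
Import GRing.Theory.
Local Open Scope ring_scope.

Notation image := Defs.image.
Notation span := Defs.span.
Notation incl := Defs.incl.

(** * Modules, spans and bornologies *)

Section LinearMaps.
Variables (V : pzRingType) (X Y Z : lmodType V).
Implicit Types (f : X -> Y) (g : Y -> Z).

Lemma is_linear0 f : is_linear f -> f 0 = 0.
Proof.
move=> hf; have := hf 1 0 0; rewrite !scale1r addr0 => e.
by apply: (@addrI _ (f 0)); rewrite addr0 -e.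
Qed.

Lemma is_linearD f u v : is_linear f -> f (u + v) = f u + f v.
Proof. by move=> hf; have := hf 1 u v; rewrite !scale1r. Qed.

Lemma is_linearZ f a u : is_linear f -> f (a *: u) = a *: f u.
Proof. by move=> hf; have := hf a u 0; rewrite (is_linear0 hf) !addr0. Qed.

Lemma is_linear_comp f g : is_linear f -> is_linear g -> is_linear (fun x => g (f x)).
Proof. by move=> hf hg a u v; rewrite hf hg. Qed.

End LinearMaps.

Lemma is_linear_add (V : comPzRingType) (X Y : lmodType V) (f g : X -> Y) (a : V) :
  is_linear f -> is_linear g -> is_linear (fun x => a *: f x + g x).
Proof.
move=> hf hg c u v; rewrite hf hg scalerDr !scalerA mulrC -!scalerA.
by rewrite scalerDr addrACA.
Qed.

Lemma lmul_is_linear (V : pzRingType) (R : algType V) (c : R) : is_linear (fun y => c * y).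
Proof. by move=> a u v; rewrite mulrDr scalerAr. Qed.

Lemma rmul_is_linear (V : pzRingType) (R : algType V) (c : R) : is_linear (fun y => y * c).
Proof. by move=> a u v; rewrite mulrDl scalerAl. Qed.

Section Spans.
Variables (V : pzRingType) (X Y : lmodType V).
Implicit Types (A M : X -> Prop).

Lemma span_submod A : is_submod (span A).
Proof. by split; [exact: span_zero | split; [exact: span_add | exact: span_scale]]. Qed.

Lemma span_min A M : is_submod M -> incl A M -> incl (span A) M.
Proof. by move=> [h0 [hD hZ]] hAM x; elim => // *; [apply: hD | apply: hZ]. Qed.

Lemma span_mono A A' : incl A A' -> incl (span A) (span A').
Proof. by move=> h; apply: span_min; [exact: span_submod | move=> x /h; apply: span_in]. Qed.

Lemma span_idem A : incl (span (span A)) (span A).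
Proof. by apply: span_min; [exact: span_submod | move=> x].  Qed.

Lemma image_span (f : X -> Y) A : is_linear f -> incl (image f (span A)) (span (image f A)).
Proof.
move=> hf _ [x [hx ->]]; elim: hx.
- by rewrite (is_linear0 hf); apply: span_zero.
- by move=> z hz; apply: span_in; exists z.
- by move=> u v _ hu _ hv; rewrite is_linearD //; apply: span_add.
- by move=> a u _ hu; rewrite is_linearZ //; apply: span_scale.
Qed.

Lemma image_submod (f : X -> Y) M : is_linear f -> is_submod M -> is_submod (image f M).
Proof.
move=> hf [h0 [hD hZ]]; split; first by exists 0; rewrite (is_linear0 hf).
split.
- move=> _ _ [x [hx ->]] [y [hy ->]]; exists (x + y).
  by rewrite is_linearD //; split => //; apply: hD.
- by move=> a _ [x [hx ->]]; exists (a *: x); rewrite is_linearZ //; split => //; apply: hZ.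
Qed.

End Spans.

Lemma image_mono (X Y : Type) (f : X -> Y) (A A' : X -> Prop) :
  incl A A' -> incl (image f A) (image f A').
Proof. by move=> h _ [x [hx ->]]; exists x; split => //; apply: h. Qed.

Section Bornologies.
Variables (V : pzRingType) (X : lmodType V) (B : (X -> Prop) -> Prop).
Hypothesis hB : is_convex_bornology B.

Lemma born_fin (s : seq X) : B (fun x => x \in s).
Proof. by apply: hB.1; exists s. Qed.

Lemma born_sub A A' : B A -> incl A' A -> B A'.
Proof. exact: hB.2.1. Qed.

Lemma born_union A A' : B A -> B A' -> B (fun x => A x \/ A' x).
Proof. exact: hB.2.2.1. Qed.

Lemma born_span A : B A -> B (span A).
Proof. exact: hB.2.2.2. Qed.

Lemma born_single (x : X) : B (fun y => y = x).
Proof. by apply: born_sub (born_fin [:: x]) _ => y ->; rewrite inE. Qed.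

Lemma born_empty : B (fun _ => False).
Proof. by apply: born_sub (born_fin [::]) _ => y []. Qed.

Lemma born_finunion (F : nat -> X -> Prop) N :
  (forall n, (n < N)%N -> B (F n)) -> B (fun x => exists2 n, (n < N)%N & F n x).
Proof.
elim: N => [|N IH] hF; first by apply: born_sub born_empty _ => x [].
apply: born_sub (born_union (IH (fun n hn => hF n (ltnW hn))) (hF N (ltnSn N))) _.
move=> x [n]; rewrite ltnS leq_eqVlt => /orP [/eqP -> | hn] hx; [by right | by left; exists n].
Qed.

End Bornologies.

Lemma alg_mul (V : pzRingType) (R : algType V) (B : (R -> Prop) -> Prop) A A' :
  is_alg_bornology B -> B A -> B A' -> B (setmul A A').
Proof. by move=> [_ h]; apply: h. Qed.

Lemma alg_hom1 (V : pzRingType) (R T : algType V) (f : R -> T) : is_alg_hom f -> f 1 = 1.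
Proof. by case=> _ []. Qed.

Lemma alg_homM (V : pzRingType) (R T : algType V) (f : R -> T) :
  is_alg_hom f -> forall x y, f (x * y) = f x * f y.
Proof. by case=> _ []. Qed.

Section BoundedMaps.
Variables (V : pzRingType) (X Y Z : lmodType V).
Variables (BX : (X -> Prop) -> Prop) (BY : (Y -> Prop) -> Prop) (BZ : (Z -> Prop) -> Prop).

Lemma bounded_map_comp (f : X -> Y) (g : Y -> Z) :
  is_convex_bornology BZ -> bounded_map BX BY f -> bounded_map BY BZ g ->
  bounded_map BX BZ (fun x => g (f x)).
Proof.
move=> hZ hf hg A hA; apply: (born_sub hZ (hg _ (hf _ hA))).
by move=> _ [x [hx ->]]; exists (f x); split => //; exists x.
Qed.

Lemma bounded_map_id : is_convex_bornology BX -> bounded_map BX BX id.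
Proof. by move=> hX A hA; apply: (born_sub hX hA) => _ [x [hx ->]]. Qed.

Lemma bounded_map_add (f g : X -> Y) (a : V) :
  is_convex_bornology BY -> bounded_map BX BY f -> bounded_map BX BY g ->
  bounded_map BX BY (fun x => a *: f x + g x).
Proof.
move=> hY hf hg A hA.
apply: (born_sub hY (born_span hY (born_union hY (hf _ hA) (hg _ hA)))) => _ [x [hx ->]].
by apply: span_add; [apply/span_scale/span_in; left | apply: span_in; right]; exists x.
Qed.

End BoundedMaps.

Lemma lmul_bounded (V : pzRingType) (R : algType V) (B : (R -> Prop) -> Prop) (c : R) :
  is_alg_bornology B -> bounded_map B B (fun y => c * y).
Proof.
move=> hB A hA; apply: (born_sub hB.1 (alg_mul hB (born_single hB.1 c) hA)).
by move=> _ [y [hy ->]]; exists c, y.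
Qed.

Lemma rmul_bounded (V : pzRingType) (R : algType V) (B : (R -> Prop) -> Prop) (c : R) :
  is_alg_bornology B -> bounded_map B B (fun y => y * c).
Proof.
move=> hB A hA; apply: (born_sub hB.1 (alg_mul hB hA (born_single hB.1 c))).
by move=> _ [y [hy ->]]; exists y, c.
Qed.

Record submodule (V : pzRingType) (X : lmodType V) :=
  Submodule { submod_set :> X -> Prop; submodP : is_submod submod_set }.

Section SubmoduleType.
Variables (V : pzRingType) (X : lmodType V) (U : submodule X).

Definition submod_pred : {pred X} := fun x => `[< U x >].

Lemma submod_pred_closed : submod_closed submod_pred.
Proof.
have [h0 [hD hZ]] := submodP U; split; first exact/asboolP.
by move=> a x y /asboolP hx /asboolP hy; apply/asboolP; apply: hD => //; apply: hZ.
Qed.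

HB.instance Definition _ := GRing.isSubmodClosed.Build V X submod_pred submod_pred_closed.

Record submod_type := SubmodType { submod_val : X; _ : submod_val \in submod_pred }.
HB.instance Definition _ := [isSub for submod_val].
HB.instance Definition _ := [Choice of submod_type by <:].
HB.instance Definition _ := [SubChoice_isSubLmodule of submod_type by <:].

Definition submod_elt (x : X) (hx : U x) : submod_type := SubmodType (asboolT hx).

Lemma submod_valP (x : submod_type) : U (submod_val x).
Proof. by case: x => x /= /asboolP. Qed.

Lemma submod_val_is_linear : is_linear submod_val.
Proof. by []. Qed.

End SubmoduleType.

(** * Tensor products *)

Definition img2 (X Y Z : Type) (f : X -> Y -> Z) (A : X -> Prop) (B : Y -> Prop) : Z -> Prop :=
  fun z => exists x y, A x /\ B y /\ z = f x y.

Lemma img2_mono (X Y Z : Type) (f : X -> Y -> Z) A A' B B' :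
  incl A A' -> incl B B' -> incl (img2 f A B) (img2 f A' B').
Proof.
move=> hA hB _ [x [y [hx [hy ->]]]].
by exists x, y; split; [apply: hA | split; [apply: hB |]].
Qed.

Section TensorProducts.
Variables (V : pzRingType) (X Y T : lmodType V) (t : X -> Y -> T).
Hypothesis ht : is_tensor_product t.

Lemma tensor_linear_r x : is_linear (t x).
Proof. exact: ht.1.1. Qed.

Lemma tensor_linear_l y : is_linear (fun x => t x y).
Proof. exact: ht.1.2. Qed.

Lemma tensor_lift (W : lmodType V) (f : X -> Y -> W) :
  is_bilinear f -> exists2 g : T -> W, is_linear g & forall x y, g (t x y) = f x y.
Proof. by move=> hf; have [g [hg [hgf _]]] := ht.2 W f hf; exists g. Qed.

Lemma tensor_linear_eq (W : lmodType V) (g1 g2 : T -> W) :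
  is_linear g1 -> is_linear g2 -> (forall x y, g1 (t x y) = g2 (t x y)) -> g1 =1 g2.
Proof.
move=> hg1 hg2 e.
have hf : is_bilinear (fun x y => g1 (t x y)).
  by split=> [x | y]; apply: is_linear_comp hg1; [exact: tensor_linear_r | exact: tensor_linear_l].
have [g [_ [_ hgu]]] := ht.2 W _ hf.
by move=> z; rewrite (hgu g1 hg1 (fun _ _ => erefl)) (hgu g2 hg2 (fun x y => esym (e x y))).
Qed.

(* Lift the bilinear corestriction of t to the span of the pure tensors; composed with the
   inclusion it is the identity by uniqueness. *)
Lemma tensor_span_pure z : span (img2 t (fun _ => True) (fun _ => True)) z.
Proof.
pose P := Submodule (span_submod (img2 t (fun _ => True) (fun _ => True))).
have hP x y : P (t x y) by apply: span_in; exists x, y.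
pose f x y : submod_type P := submod_elt (hP x y).
have hf : is_bilinear f.
  by split=> [x | y] a u v; apply: val_inj; rewrite /= ?(tensor_linear_r x) ?(tensor_linear_l y).
have [g hg hgf] := tensor_lift hf.
have -> : z = submod_val (g z).
  apply: (@tensor_linear_eq _ id (fun z => submod_val (g z))) => //.
  - exact: is_linear_comp hg (@submod_val_is_linear _ _ P).
  - by move=> x y; rewrite hgf.
exact: (submod_valP (g z)).
Qed.

End TensorProducts.

Definition bounded_bilinear (V : pzRingType) (X Y W : lmodType V) (BX : (X -> Prop) -> Prop)
    (BY : (Y -> Prop) -> Prop) (BW : (W -> Prop) -> Prop) (f : X -> Y -> W) : Prop :=
  forall A B, BX A -> BY B -> BW (img2 f A B).

Section BoundedBilinear.
Variables (V : pzRingType) (X Y W Z : lmodType V).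
Variables (BX : (X -> Prop) -> Prop) (BY : (Y -> Prop) -> Prop) (BW : (W -> Prop) -> Prop).
Variable (f : X -> Y -> W).
Hypotheses (hX : is_convex_bornology BX) (hY : is_convex_bornology BY).
Hypothesis hW : is_convex_bornology BW.

Lemma bounded_bilinear_l y : bounded_bilinear BX BY BW f -> bounded_map BX BW (fun x => f x y).
Proof.
move=> hf A hA; apply: (born_sub hW (hf _ _ hA (born_single hY y))).
by move=> _ [x [hx ->]]; exists x, y.
Qed.

Lemma bounded_bilinear_r x : bounded_bilinear BX BY BW f -> bounded_map BY BW (f x).
Proof.
move=> hf B hB; apply: (born_sub hW (hf _ _ (born_single hX x) hB)).
by move=> _ [y [hy ->]]; exists x, y.
Qed.

Lemma bounded_bilinear_swap :
  bounded_bilinear BX BY BW f -> bounded_bilinear BY BX BW (fun y x => f x y).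
Proof.
move=> hf B A hB hA; apply: (born_sub hW (hf _ _ hA hB)).
by move=> _ [y [x [hy [hx ->]]]]; exists x, y.
Qed.

Lemma bounded_bilinear_comp (BZ : (Z -> Prop) -> Prop) (h : W -> Z) :
  is_convex_bornology BZ -> bounded_map BW BZ h -> bounded_bilinear BX BY BW f ->
  bounded_bilinear BX BY BZ (fun x y => h (f x y)).
Proof.
move=> hZ hh hf A B hA hB; apply: (born_sub hZ (hh _ (hf _ _ hA hB))).
by move=> _ [x [y [hx [hy ->]]]]; exists (f x y); split => //; exists x, y.
Qed.

End BoundedBilinear.

Lemma bounded_bilinear_precomp (V : pzRingType) (X Y X' Y' W : lmodType V)
    BX BY BX' BY' (BW : (W -> Prop) -> Prop) (f : X' -> Y' -> W) (u : X -> X') (v : Y -> Y') :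
  is_convex_bornology BW -> bounded_map BX BX' u -> bounded_map BY BY' v ->
  bounded_bilinear BX' BY' BW f -> bounded_bilinear BX BY BW (fun x y => f (u x) (v y)).
Proof.
move=> hW hu hv hf A B hA hB; apply: (born_sub hW (hf _ _ (hu _ hA) (hv _ hB))).
by move=> _ [x [y [hx [hy ->]]]]; exists (u x), (v y); split; [exists x | split; [exists y |]].
Qed.

Definition tensor_bounded (V : pzRingType) (X Y T : lmodType V) (BX : (X -> Prop) -> Prop)
    (BY : (Y -> Prop) -> Prop) (t : X -> Y -> T) (A : T -> Prop) : Prop :=
  exists S U, is_submod S /\ BX S /\ is_submod U /\ BY U /\ incl A (span (img2 t S U)).

Section TensorBornology.
Variables (V : pzRingType) (X Y T : lmodType V) (t : X -> Y -> T).
Variables (BX : (X -> Prop) -> Prop) (BY : (Y -> Prop) -> Prop).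
Hypotheses (hX : is_convex_bornology BX) (hY : is_convex_bornology BY).
Hypothesis ht : is_tensor_product t.

Lemma tensor_bornology_gen S U :
  is_submod S -> BX S -> is_submod U -> BY U -> tensor_bornology BX BY t (span (img2 t S U)).
Proof. by move=> hS hbS hU hbU B' _ h; apply: h. Qed.

Lemma tensor_bornology_convex : is_convex_bornology (tensor_bornology BX BY t).
Proof.
split; first by move=> A hA B' hB' _; apply: hB'.1.
split; first by move=> A A' hA hsub B' hB' h; apply: (hB'.2.1 A) => //; apply: hA.
split; first by move=> A A' hA hA' B' hB' h; apply: hB'.2.2.1; [apply: hA | apply: hA'].
by move=> A hA B' hB' h; apply: hB'.2.2.2; apply: hA.
Qed.

Lemma tensor_bounded_bilinear : bounded_bilinear BX BY (tensor_bornology BX BY t) t.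
Proof.
move=> A B hA hB; apply: (born_sub tensor_bornology_convex (tensor_bornology_gen
  (span_submod A) (born_span hX hA) (span_submod B) (born_span hY hB))).
by move=> z hz; apply: span_in; apply: img2_mono hz => x; apply: span_in.
Qed.

Lemma tensor_bounded_sub A A' :
  tensor_bounded BX BY t A -> incl A' A -> tensor_bounded BX BY t A'.
Proof.
move=> [S [U [hS [hbS [hU [hbU hA]]]]]] h.
by exists S, U; do 4 (split => //); move=> x /h /hA.
Qed.

Lemma tensor_bounded_span A : tensor_bounded BX BY t A -> tensor_bounded BX BY t (span A).
Proof.
move=> [S [U [hS [hbS [hU [hbU hA]]]]]]; exists S, U; do 4 (split => //).
by move=> x hx; apply: span_idem; exact: (span_mono hA hx).
Qed.

Lemma tensor_bounded_union A A' : tensor_bounded BX BY t A -> tensor_bounded BX BY t A' ->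
  tensor_bounded BX BY t (fun x => A x \/ A' x).
Proof.
move=> [S [U [hS [hbS [hU [hbU hA]]]]]] [S' [U' [hS' [hbS' [hU' [hbU' hA']]]]]].
exists (span (fun x => S x \/ S' x)), (span (fun x => U x \/ U' x)).
do 2 (split; first exact: span_submod;
      split; first by apply: born_span => //; apply: born_union).
move=> x [/hA | /hA'] hx; apply: span_mono hx;
  apply: img2_mono => y hy; apply: span_in; by [left | right].
Qed.

Lemma tensor_bounded_single z : tensor_bounded BX BY t (fun y => y = z).
Proof.
have tensor_bounded_pure x y : tensor_bounded BX BY t (fun w => w = t x y).
  exists (span (fun x' => x' = x)), (span (fun y' => y' = y)).
  do 2 (split; first exact: span_submod;
        split; first by apply: born_span => //; apply: born_single).
  by move=> _ ->; apply: span_in; exists x, y; do 2 (split; first exact: span_in).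
elim: (tensor_span_pure ht z) => [| _ [x [y [_ [_ ->]]]] | u v _ hu _ hv | a u _ hu] //.
- by apply: tensor_bounded_sub (tensor_bounded_span (tensor_bounded_pure 0 0)) _ => _ ->;
    apply: span_zero.
- apply: tensor_bounded_sub (tensor_bounded_span (tensor_bounded_union hu hv)) _ => _ ->.
  by apply: span_add; apply: span_in; [left | right].
- apply: tensor_bounded_sub (tensor_bounded_span hu) _ => _ ->.
  by apply/span_scale/span_in.
Qed.

Lemma tensor_bounded_convex : is_convex_bornology (tensor_bounded BX BY t).
Proof.
split.
  move=> A [s hs]; apply: tensor_bounded_sub hs; elim: s {A} => [|z s IH].
    by apply: tensor_bounded_sub (tensor_bounded_single 0) _ => x; rewrite in_nil.
  apply: tensor_bounded_sub (tensor_bounded_union (tensor_bounded_single z) IH) _ => x.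
  by rewrite inE => /orP [/eqP -> | h]; [left | right].
split; first by move=> A A' hA h; apply: tensor_bounded_sub hA h.
split; [exact: tensor_bounded_union | exact: tensor_bounded_span].
Qed.

Lemma tensor_bornologyE A : tensor_bornology BX BY t A <-> tensor_bounded BX BY t A.
Proof.
split=> [hA | [S [U [hS [hbS [hU [hbU hA]]]]]]].
  apply: hA tensor_bounded_convex _ => S U hS hbS hU hbU.
  by exists S, U; do 4 (split => //); move=> z.
exact: (born_sub tensor_bornology_convex (tensor_bornology_gen hS hbS hU hbU) hA).
Qed.

Lemma tensor_lift_bounded (W : lmodType V) (BW : (W -> Prop) -> Prop) (f : X -> Y -> W) g :
  is_convex_bornology BW -> bounded_bilinear BX BY BW f ->
  is_linear g -> (forall x y, g (t x y) = f x y) ->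
  bounded_map (tensor_bornology BX BY t) BW g.
Proof.
move=> hW hf hg hgt A /tensor_bornologyE [S [U [_ [hbS [_ [hbU hA]]]]]].
apply: (born_sub hW (born_span hW (hf _ _ hbS hbU))).
move=> w hw; apply: span_mono (image_span hg (image_mono hA hw)).
by move=> _ [_ [[x [y [hx [hy ->]]]] ->]]; exists x, y; rewrite hgt.
Qed.

End TensorBornology.

Lemma tensor_bornology_mono (V : pzRingType) (X Y T : lmodType V) (t : X -> Y -> T)
    BX BY BX' BY' A :
  (forall A, BX A -> BX' A) -> (forall A, BY A -> BY' A) ->
  tensor_bornology BX BY t A -> tensor_bornology BX' BY' t A.
Proof.
move=> hXX hYY hA B' hB' h; apply: hA => // S U hS hbS hU hbU.
by apply: h => //; [exact: hXX | exact: hYY].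
Qed.

Lemma span_mul_closed (V : pzRingType) (R : algType V) (A A' C : R -> Prop) :
  is_submod C -> (forall a b, A a -> A' b -> C (a * b)) ->
  forall a b, span A a -> span A' b -> C (a * b).
Proof.
move=> [h0 [hD hZ]] h a b ha hb; elim: ha b hb.
- by move=> b _; rewrite mul0r.
- move=> x hx b; elim=> [| y hy | y z _ hy _ hz | c y _ hy].
  + by rewrite mulr0.
  + exact: h.
  + by rewrite mulrDr; apply: hD.
  + by rewrite -scalerAr; apply: hZ.
- by move=> x y _ hx _ hy b hb; rewrite mulrDl; apply: hD; [apply: hx | apply: hy].
- by move=> c x _ hx b hb; rewrite -scalerAl; apply: hZ; apply: hx.
Qed.

Section TensorAlgebra.
Variables (V : pzRingType) (R S T : algType V) (t : R -> S -> T).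
Hypothesis ht : is_tensor_algebra t.

Lemma tensor_one : t 1 1 = 1.
Proof. exact: ht.2.1. Qed.

Lemma tensor_mul r s r' s' : t r s * t r' s' = t (r * r') (s * s').
Proof. exact: ht.2.2. Qed.

Lemma span_img2_mul A B A' B' :
  incl (setmul (span (img2 t A B)) (span (img2 t A' B')))
       (span (img2 t (span (setmul A A')) (span (setmul B B')))).
Proof.
move=> _ [a [b [ha [hb ->]]]]; apply: (span_mul_closed (span_submod _) _ ha hb).
move=> _ _ [s [u [hs [hu ->]]]] [s' [u' [hs' [hu' ->]]]]; rewrite tensor_mul.
apply: span_in; exists (s * s'), (u * u').
by split; [|split] => //; apply: span_in; [exists s, s' | exists u, u'].
Qed.

Lemma mpow_img2 (M : T -> Prop) (A : R -> Prop) (B : S -> Prop) n :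
  incl M (span (img2 t A B)) -> incl (mpow M n) (span (img2 t (mpow A n) (mpow B n))).
Proof.
move=> hM; elim: n => [|n IH] /=; apply: span_min (span_submod _) _.
  move=> _ ->; apply: span_in; exists 1, 1.
  by rewrite tensor_one; do 2 (split; first exact: span_in).
move=> _ [a [b [ha [hb ->]]]]; apply: span_img2_mul.
by exists a, b; split; [apply: IH | split; [apply: hM |]].
Qed.

Lemma tensor_left_is_alg_hom : is_alg_hom (fun x => t x 1).
Proof.
split; first exact: (tensor_linear_l ht.1).
by split=> [|x y]; rewrite ?tensor_mul ?mulr1 // tensor_one.
Qed.

Lemma tensor_right_is_alg_hom : is_alg_hom (t 1).
Proof.
split; first exact: (tensor_linear_r ht.1).
by split=> [|x y]; rewrite ?tensor_mul ?mulr1 // tensor_one.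
Qed.

Lemma tensor_mul_pure x y : t x y = t x 1 * t 1 y.
Proof. by rewrite tensor_mul mulr1 mul1r. Qed.

Lemma tensor_bounded_alg BX BY :
  is_alg_bornology BX -> is_alg_bornology BY -> is_alg_bornology (tensor_bounded BX BY t).
Proof.
move=> hX hY; split; first exact: (tensor_bounded_convex hX.1 hY.1 ht.1).
move=> A A' [S1 [U [_ [hbS [_ [hbU hA]]]]]] [S' [U' [_ [hbS' [_ [hbU' hA']]]]]].
exists (span (setmul S1 S')), (span (setmul U U')).
split; first exact: span_submod; split; first exact: (born_span hX.1 (alg_mul hX hbS hbS')).
split; first exact: span_submod; split; first exact: (born_span hY.1 (alg_mul hY hbU hbU')).
move=> _ [a [b [ha [hb ->]]]]; apply: span_img2_mul.
by exists a, b; split; [apply: hA | split; [apply: hA' |]].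
Qed.

End TensorAlgebra.

(** * Linear growth *)

Definition rho_set (V : pzRingType) (R : algType V) (pi : V) (eps r : Rdefinitions.R)
    (M : R -> Prop) : R -> Prop :=
  span (fun x => exists n, pimul pi (lg_exp eps r n) (mpow M n) x).

Lemma mpow_bounded (V : pzRingType) (R : algType V) (B : (R -> Prop) -> Prop) M n :
  is_alg_bornology B -> B M -> B (mpow M n).
Proof.
move=> hB hM; elim: n => [|n IH] /=; apply: (born_span hB.1).
  exact: born_single hB.1 1.
exact: alg_mul.
Qed.

Section AlgebraHomImages.
Variables (V : pzRingType) (R T : algType V) (f : R -> T).
Hypothesis hf : is_alg_hom f.

Lemma image_setmul A A' : incl (image f (setmul A A')) (setmul (image f A) (image f A')).
Proof.
move=> _ [x [[a [b [ha [hb ->]]]] ->]]; exists (f a), (f b).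
by split; [exists a | split; [exists b | rewrite (alg_homM hf)]].
Qed.

Lemma image_mpow M n : incl (image f (mpow M n)) (mpow (image f M) n).
Proof.
elim: n => [|n IH] /= y /(image_span hf.1) hy; apply: span_mono hy.
  by move=> _ [x [-> ->]]; rewrite (alg_hom1 hf).
by move=> z /image_setmul [a [b [ha [hb ->]]]]; exists a, b; split; [apply: IH |].
Qed.

Lemma image_rho_set pi eps r M :
  incl (image f (rho_set pi eps r M)) (rho_set pi eps r (image f M)).
Proof.
move=> y /(image_span hf.1) hy; apply: span_mono hy => _ [_ [[n [x [hx ->]]] ->]].
by exists n, (f x); rewrite (is_linearZ _ _ hf.1); split => //; apply: image_mpow; exists x.
Qed.

Definition pullback (B : (T -> Prop) -> Prop) : (R -> Prop) -> Prop := fun A => B (image f A).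

Lemma pullback_alg B : is_alg_bornology B -> is_alg_bornology (pullback B).
Proof.
move=> hB; have hc := hB.1; split; first split.
- move=> A [s hs]; apply: (born_sub hc (born_fin hc (map f s))).
  by move=> _ [x [hx ->]]; apply: map_f; apply: hs.
split; first by move=> A A' hA h; apply: (born_sub hc hA); apply: image_mono.
split.
  move=> A A' hA hA'; apply: (born_sub hc (born_union hc hA hA')).
  by move=> _ [x [[hx | hx] ->]]; [left | right]; exists x.
- by move=> A hA; apply: (born_sub hc (born_span hc hA)); apply: image_span hf.1.
- by move=> A A' hA hA'; apply: (born_sub hc (alg_mul hB hA hA')); apply: image_setmul.
Qed.

Lemma pullback_rho B pi eps M :
  is_alg_bornology B -> rho_le1 pi eps B (image f M) -> rho_le1 pi eps (pullback B) M.
Proof. by move=> hB hM r hr; apply: (born_sub hB.1 (hM r hr)); apply: image_rho_set. Qed.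

End AlgebraHomImages.

Section LinearGrowth.
Variables (V : pzRingType) (R : algType V) (pi : V) (eps : Rdefinitions.R).

Lemma lg_bornology_ge (B : (R -> Prop) -> Prop) A : B A -> lg_bornology pi eps B A.
Proof. by move=> hA B' _ h _; apply: h. Qed.

Lemma lg_bornology_alg (B : (R -> Prop) -> Prop) : is_alg_bornology (lg_bornology pi eps B).
Proof.
split; first split.
- by move=> A hA B' hB' _ _; apply: hB'.1.1.
split; first by move=> A A' hA hsub B' hB' h1 h2; apply: (hB'.1.2.1 A) => //; apply: hA.
split; first by move=> A A' hA hA' B' hB' h1 h2; apply: hB'.1.2.2.1; [apply: hA | apply: hA'].
- by move=> A hA B' hB' h1 h2; apply: hB'.1.2.2.2; apply: hA.
- by move=> A A' hA hA' B' hB' h1 h2; apply: hB'.2; [apply: hA | apply: hA'].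
Qed.

Lemma lg_bornology_rho (B : (R -> Prop) -> Prop) M :
  is_submod M -> lg_bornology pi eps B M -> rho_le1 pi eps (lg_bornology pi eps B) M.
Proof. by move=> hM hMb r hr B' hB' h1 h2; apply: (h2 M hM _ r hr); apply: hMb. Qed.

End LinearGrowth.

(* The pullback along f of the linear growth bornology of T is among the bornologies
   whose intersection defines that of R. *)
Lemma lg_bounded_map (V : pzRingType) (R T : algType V) (pi : V) eps
    (BR : (R -> Prop) -> Prop) (BT : (T -> Prop) -> Prop) (f : R -> T) :
  is_alg_hom f -> bounded_map BR BT f ->
  bounded_map (lg_bornology pi eps BR) (lg_bornology pi eps BT) f.
Proof.
move=> hf hfb A hA; apply: (hA (pullback f (lg_bornology pi eps BT))).
- exact: (pullback_alg hf (lg_bornology_alg pi eps BT)).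
- by move=> A0 hA0; apply: lg_bornology_ge; apply: hfb.
- move=> M hM hbM; apply: (pullback_rho hf (lg_bornology_alg pi eps BT)).
  by apply: lg_bornology_rho => //; apply: image_submod hf.1 hM.
Qed.

Lemma rho_set_head_bounded (V : pzRingType) (R : algType V) pi eps
    (B : (R -> Prop) -> Prop) M r N :
  is_alg_bornology B -> B M -> rho_le1 pi eps B M ->
  Rlt 1 r ->
  B (span (fun x => rho_set pi eps r M x \/ exists2 n, (n < N)%N & mpow M n x)).
Proof.
move=> hB hM hrho hr; apply/(born_span hB.1)/(born_union hB.1 (hrho r hr)).
by apply: (born_finunion hB.1) => n _; apply: mpow_bounded.
Qed.

Section TensorRho.
Variables (V : comPzRingType) (pi : V) (eps : Rdefinitions.R).
Hypotheses (heps0 : Rlt 0 eps)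
  (heps1 : Rlt eps 1).
Variables (R S T : algType V) (t : R -> S -> T).
Hypothesis ht : is_tensor_algebra t.
Variables (BX : (R -> Prop) -> Prop) (BY : (S -> Prop) -> Prop).
Hypotheses (hX : is_alg_bornology BX) (hY : is_alg_bornology BY).

(* For large n, pi^(e n) (s (x) u) = (pi^(a n) s) (x) (pi^(e n - a n) u) with a n <= e n - a n,
   where a and e are the exponents for r1 and r given by lg_exp_double_le; the finitely many
   small n are handled by putting S^n and U^n themselves into the bounded sets. *)
Lemma tensor_bounded_rho M :
  (forall A, is_submod A -> BX A -> rho_le1 pi eps BX A) ->
  (forall A, is_submod A -> BY A -> rho_le1 pi eps BY A) ->
  tensor_bounded BX BY t M -> rho_le1 pi eps (tensor_bounded BX BY t) M.
Proof.
move=> hrX hrY [S1 [U [hS [hbS [hU [hbU hMs]]]]]] r hr.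
have [r1 [hr1 [N hN]]] := lg_exp_double_le _ _ heps0 heps1 hr.
pose a := lg_exp eps r1; pose e := lg_exp eps r.
pose S' := span (fun x => rho_set pi eps r1 S1 x \/ exists2 n, (n < N)%N & mpow S1 n x).
pose U' := span (fun x => rho_set pi eps r1 U x \/ exists2 n, (n < N)%N & mpow U n x).
have hpure n s u : mpow S1 n s -> mpow U n u -> span (img2 t S' U') (pi ^+ e n *: t s u).
  move=> hs hu; have [hnN | hNn] := ltnP n N.
    rewrite -(is_linearZ _ _ (tensor_linear_r ht.1 s)); apply: span_in; exists s, (pi ^+ e n *: u).
    split; first by apply: span_in; right; exists n.
    by split => //; apply/span_scale/span_in; right; exists n.
  have h2a : (2 * a n <= e n)%N by apply/leP/hN/leP.
  have ha : (a n <= e n - a n)%N.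
    by rewrite leq_subRL ?addnn -?mul2n // (leq_trans _ h2a) ?leq_pmull.
  rewrite -(subnKC (leq_trans ha (leq_subr _ _))) exprD -scalerA.
  rewrite -(is_linearZ _ _ (tensor_linear_r ht.1 s)) -(is_linearZ _ _ (tensor_linear_l ht.1 _)).
  apply: span_in; exists (pi ^+ a n *: s), (pi ^+ (e n - a n) *: u).
  split; first by apply/span_in; left; apply: span_in; exists n, s.
  split => //; rewrite -(subnK ha) exprD -scalerA; apply/span_scale/span_in; left.
  by apply: span_in; exists n, u.
exists S', U'; split; first exact: span_submod.
split; first exact: (rho_set_head_bounded _ hX hbS (hrX _ hS hbS) hr1).
split; first exact: span_submod.
split; first exact: (rho_set_head_bounded _ hY hbU (hrY _ hU hbU) hr1).
apply: span_min (span_submod _) _ => _ [n [y [hy ->]]].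
pose C y := span (img2 t S' U') (pi ^+ e n *: y).
have hC : is_submod C.
  split; first by rewrite /C scaler0; apply: span_zero.
  split=> [u v hu hv | c u hu]; first by rewrite /C scalerDr; apply: span_add.
  by rewrite /C scalerA mulrC -scalerA; apply: span_scale.
apply: (span_min hC _ (mpow_img2 ht hMs hy)) => _ [s [u [hs [hu ->]]]].
exact: hpure.
Qed.

End TensorRho.

Section LinearGrowthTensor.
Variables (V : comPzRingType) (pi : V) (eps : Rdefinitions.R).
Hypotheses (heps0 : Rlt 0 eps)
  (heps1 : Rlt eps 1).
Variables (R S T : algType V) (t : R -> S -> T).
Hypothesis ht : is_tensor_algebra t.
Variables (BR : (R -> Prop) -> Prop) (BS : (S -> Prop) -> Prop).
Hypotheses (hBR : is_alg_bornology BR) (hBS : is_alg_bornology BS).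

Let lg_T := lg_bornology pi eps (tensor_bornology BR BS t).

Lemma tensor_lg_le_lg_tensor A :
  tensor_bornology (lg_bornology pi eps BR) (lg_bornology pi eps BS) t A -> lg_T A.
Proof.
have hT : is_alg_bornology lg_T := lg_bornology_alg _ _ _.
have hTt := tensor_bounded_bilinear (t := t) hBR.1 hBS.1.
move=> hA; apply: hA; first exact: hT.1.
move=> S1 U _ hbS _ hbU.
have hS1 := lg_bounded_map (tensor_left_is_alg_hom ht)
  (bounded_bilinear_l hBS.1 (tensor_bornology_convex _ _ _) 1 hTt) hbS.
have hU1 := lg_bounded_map (tensor_right_is_alg_hom ht)
  (bounded_bilinear_r hBR.1 (tensor_bornology_convex _ _ _) 1 hTt) hbU.
apply: (born_sub hT.1 (born_span hT.1 (alg_mul hT hS1 hU1))).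
apply: span_mono => _ [s [u [hs [hu ->]]]]; exists (t s 1), (t 1 u).
by rewrite -tensor_mul_pure //; split; [exists s | split; [exists u |]].
Qed.

Lemma lg_tensor_le_tensor_lg A :
  lg_T A -> tensor_bornology (lg_bornology pi eps BR) (lg_bornology pi eps BS) t A.
Proof.
have hlR := lg_bornology_alg pi eps BR; have hlS := lg_bornology_alg pi eps BS.
move=> hA; apply/(tensor_bornologyE hlR.1 hlS.1 ht.1); apply: hA.
- exact: tensor_bounded_alg.
- move=> A0 hA0; apply/(tensor_bornologyE hlR.1 hlS.1 ht.1).
  by apply: tensor_bornology_mono hA0 => A1; apply: lg_bornology_ge.
- move=> M hM hbM; apply: tensor_bounded_rho => // A1 hA1; exact: lg_bornology_rho.
Qed.

Theorem lg_tensor_bornologyE A :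
  lg_T A <-> tensor_bornology (lg_bornology pi eps BR) (lg_bornology pi eps BS) t A.
Proof. by split; [exact: lg_tensor_le_tensor_lg | exact: tensor_lg_le_lg_tensor]. Qed.

End LinearGrowthTensor.

(** * Completions *)

Section Completion.
Variables (V : pzRingType) (pi : V) (X C W : lmodType V) (j : X -> C).
Variables (BX : (X -> Prop) -> Prop) (BC : (C -> Prop) -> Prop) (BW : (W -> Prop) -> Prop).
Hypothesis hj : is_completion pi BX BC j.
Hypotheses (hW : is_convex_bornology BW) (hWc : is_complete pi BW).

Lemma completion_convex : is_convex_bornology BC.
Proof. exact: hj.1. Qed.

Lemma completion_complete : is_complete pi BC.
Proof. exact: hj.2.1. Qed.

Lemma completion_linear : is_linear j.
Proof. exact: hj.2.2.1. Qed.

Lemma completion_bounded : bounded_map BX BC j.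
Proof. exact: hj.2.2.2.1. Qed.

Lemma completion_lift (f : X -> W) : is_linear f -> bounded_map BX BW f ->
  exists g : C -> W, [/\ is_linear g, bounded_map BC BW g & forall x, g (j x) = f x].
Proof.
move=> hf hfb; have [g [hg [hgb [hgj _]]]] := hj.2.2.2.2 W BW f hW hWc hf hfb.
by exists g.
Qed.

Lemma completion_lift_unique (g1 g2 : C -> W) :
  is_linear g1 -> bounded_map BC BW g1 -> is_linear g2 -> bounded_map BC BW g2 ->
  (forall x, g1 (j x) = g2 (j x)) -> g1 =1 g2.
Proof.
move=> hg1 hb1 hg2 hb2 e; have [_ [_ [hjl [hjb hu]]]] := hj.
have [g [_ [_ [_ hgu]]]] :=
  hu W BW _ hW hWc (is_linear_comp hjl hg1) (bounded_map_comp hW hjb hb1).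
move=> z; rewrite (hgu g1 hg1 hb1 (fun x => erefl)).
by rewrite (hgu g2 hg2 hb2 (fun x => esym (e x))).
Qed.

End Completion.

Lemma pi_complete_separated_pointwise (V : pzRingType) (D : Type) (W : lmodType V) (pi : V)
    (M : W -> Prop) :
  pi_complete_separated pi M -> pi_complete_separated pi (fun f : D -> W => forall d, M (f d)).
Proof.
move=> [hsep hcpl]; split.
  move=> f hf hdiv; apply/funext => d; apply: hsep => // n.
  by have [y [hy ->]] := hdiv n; exists (y d).
move=> s hs hdiff.
have hdiff_d d n : exists y, M y /\ s n.+1 d - s n d = pi ^+ n *: y.
  have [y [hy e]] := hdiff n; exists (y d).
  by split; [exact: hy | exact: (congr1 (@^~ d) e)].
have [g hg] := choice (fun d => hcpl (fun n => s n d) (fun n => hs n d) (hdiff_d d)).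
exists g; split=> [d | n]; first exact: (hg d).1.
have [y hy] := choice (fun d => (hg d).2 n).
by exists y; split=> [d | ]; [exact: (hy d).1 | apply/funext => d; exact: (hy d).2].
Qed.

Lemma pi_complete_separated_sub (V : pzRingType) (X : lmodType V) (P : submodule X) (pi : V)
    (M : X -> Prop) :
  incl M P -> pi_complete_separated pi M ->
  pi_complete_separated pi (fun x : submod_type P => M (submod_val x)).
Proof.
move=> hMP [hsep hcpl]; split.
  move=> x hx hdiv; apply: val_inj; apply: hsep => // n.
  by have [y [hy ->]] := hdiv n; exists (submod_val y).
move=> s hs hdiff.
have hdiff_val n : exists y, M y /\ submod_val (s n.+1) - submod_val (s n) = pi ^+ n *: y.
  have [y [hy e]] := hdiff n; exists (submod_val y).
  by split => //; exact: (congr1 (@submod_val _ _ P) e).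
have [x [hx hxn]] := hcpl (fun n => submod_val (s n)) hs hdiff_val.
exists (submod_elt (hMP x hx)); split => // n.
have [y [hy e]] := hxn n; exists (submod_elt (hMP y hy)); split => //.
exact: val_inj.
Qed.

Section BoundedFunctions.
Variables (V : pzRingType) (D : Type) (W : lmodType V) (BW : (W -> Prop) -> Prop).
Hypothesis hW : is_convex_bornology BW.

Definition bounded_range (f : D -> W) : Prop := BW (image f (fun _ => True)).

Lemma bounded_range_submod : is_submod bounded_range.
Proof.
split; first by apply: (born_sub hW (born_single hW 0)) => _ [d [_ ->]].
split.
  move=> f g hf hg; apply: (born_sub hW (born_span hW (born_union hW hf hg))).
  by move=> _ [d [_ ->]]; apply: span_add; apply: span_in; [left | right]; exists d.
move=> a f hf; apply: (born_sub hW (born_span hW hf)) => _ [d [_ ->]].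
by apply/span_scale/span_in; exists d.
Qed.

Definition bfun := submod_type (Submodule bounded_range_submod).

Definition bfun_of (g : D -> W) (hg : bounded_range g) : bfun :=
  submod_elt (U := Submodule bounded_range_submod) hg.

Definition bfun_bornology (F : bfun -> Prop) : Prop :=
  BW (fun w => exists f d, F f /\ w = submod_val f d).

Lemma bfun_bornology_convex : is_convex_bornology bfun_bornology.
Proof.
split.
  move=> F [s hs]; rewrite /bfun_bornology.
  have : BW (fun w => exists f d, f \in s /\ w = submod_val f d).
    elim: s {hs} => [|f s IH]; first by apply: (born_sub hW (born_empty hW)) => w [f [d []]].
    apply: (born_sub hW (born_union hW (submod_valP f) IH)).
    move=> w [g [d]]; rewrite inE => -[/orP [/eqP -> | hg] ->]; first by left; exists d.
    by right; exists g, d.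
  move=> hbs; apply: (born_sub hW hbs) => w [f [d [hf ->]]].
  by exists f, d; split => //; apply: hs.
split.
  by move=> F F' hF h; apply: (born_sub hW hF) => w [f [d [/h hf ->]]]; exists f, d.
split.
  move=> F F' hF hF'; apply: (born_sub hW (born_union hW hF hF')).
  by move=> w [f [d [[hf | hf] ->]]]; [left | right]; exists f, d.
move=> F hF; apply: (born_sub hW (born_span hW hF)) => w [f [d [hf ->]]].
elim: hf => [| g hg | g h _ hg _ hh | a g _ hg] //=; first exact: span_zero.
- by apply: span_in; exists g, d.
- exact: span_add.
- exact: span_scale.
Qed.

Lemma bfun_eval_is_linear d : is_linear (fun f : bfun => submod_val f d).
Proof. by []. Qed.

Lemma bfun_eval_bounded d : bounded_map bfun_bornology BW (fun f : bfun => submod_val f d).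
Proof. by move=> F hF; apply: (born_sub hW hF) => _ [f [hf ->]]; exists f, d. Qed.

Lemma bfun_complete pi : is_complete pi BW -> is_complete pi bfun_bornology.
Proof.
move=> hc F hF; have [M [hM [hbM [hFM hMc]]]] := hc _ hF.
have hMr : incl (fun f : D -> W => forall d, M (f d)) bounded_range.
  by move=> f hf; apply: (born_sub hW hbM) => _ [d [_ ->]].
exists (fun f : bfun => forall d, M (submod_val f d)); split.
  have [h0 [hD hZ]] := hM; split=> [d | ]; first exact: h0.
  by split=> [f g hf hg d | a f hf d] /=; [apply: hD | apply: hZ].
split; first by apply: (born_sub hW hbM) => _ [f [d [hf ->]]].
split; first by move=> f hf d; apply: hFM; exists f, d.
exact: (pi_complete_separated_sub (P := Submodule bounded_range_submod) hMr
  (pi_complete_separated_pointwise D hMc)).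
Qed.

End BoundedFunctions.

Arguments bfun_bornology {V D W BW} hW.
Arguments bfun_bornology_convex {V D W BW} hW.
Arguments bfun_complete {V D W BW} hW.
Arguments bfun_eval_bounded {V D W BW} hW d.
Arguments bfun_eval_is_linear {V D W BW} hW d.
Arguments bfun_of {V D W BW hW g}.

Section BilinearExtension.
Variables (V : comPzRingType) (pi : V) (X Y Yc W : lmodType V) (jY : Y -> Yc).
Variables (BX : (X -> Prop) -> Prop) (BY : (Y -> Prop) -> Prop) (BYc : (Yc -> Prop) -> Prop).
Variable (BW : (W -> Prop) -> Prop).
Hypotheses (hX : is_convex_bornology BX) (hY : is_convex_bornology BY).
Hypotheses (hjY : is_completion pi BY BYc jY).
Hypotheses (hW : is_convex_bornology BW) (hWc : is_complete pi BW).
Variable (f : X -> Y -> W).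
Hypotheses (hf : is_bilinear f) (hfb : bounded_bilinear BX BY BW f).

(* Joint boundedness on A x B: the partial maps f(x, .), x in A, assemble into a single bounded
   map Y -> (bounded functions A -> W), whose extension to Yc recovers fe(x, .) by evaluation. *)
Lemma lifts_bounded_bilinear (fe : X -> Yc -> W) :
  (forall x, is_linear (fe x)) -> (forall x, bounded_map BYc BW (fe x)) ->
  (forall x y, fe x (jY y) = f x y) -> bounded_bilinear BX BYc BW fe.
Proof.
move=> hfel hfeb hfej A B hA hB.
pose D := {x : X | A x}.
have hrange y : bounded_range BW (fun d : D => f (sval d) y).
  rewrite /bounded_range; apply: (born_sub hW (hfb hA (born_single hY y))).
  by move=> _ [[x hx] [_ ->]]; exists x, y.
pose Phi0 y : bfun D hW := bfun_of (hrange y).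
have hPhi0 : is_linear Phi0.
  by move=> a u v; apply: val_inj; apply/funext => d /=; rewrite (hf.1 (sval d)).
have hPhi0b : bounded_map BY (bfun_bornology hW) Phi0.
  move=> B0 hB0; apply: (born_sub hW (hfb hA hB0)).
  by move=> _ [_ [[x hx] [[y [hy ->]] ->]]]; exists x, y.
have [Phi [hPhi hPhib hPhij]] :=
  completion_lift hjY (bfun_bornology_convex hW) (bfun_complete hW pi hWc) hPhi0 hPhi0b.
have eval_Phi (d : D) : (fun yc => submod_val (Phi yc) d) =1 fe (sval d).
  apply: (completion_lift_unique hjY hW hWc _ _ (hfel _) (hfeb _)).
  - exact: is_linear_comp hPhi (bfun_eval_is_linear _ _).
  - exact: bounded_map_comp hW hPhib (bfun_eval_bounded _ _).
  - by move=> y; rewrite hPhij hfej.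
apply: (born_sub hW (hPhib _ hB)) => _ [x [yc [hx [hyc ->]]]].
by exists (Phi yc), (exist _ x hx); rewrite eval_Phi; split => //; exists yc.
Qed.

Lemma bounded_bilinear_extend_r : exists fe : X -> Yc -> W,
  [/\ is_bilinear fe, bounded_bilinear BX BYc BW fe & forall x y, fe x (jY y) = f x y].
Proof.
have [fe hfe] := choice (fun x =>
  completion_lift hjY hW hWc (hf.1 x) (bounded_bilinear_r hX hW x hfb)).
have hfel x : is_linear (fe x) by case: (hfe x).
have hfeb x : bounded_map BYc BW (fe x) by case: (hfe x).
have hfej x y : fe x (jY y) = f x y by case: (hfe x).
exists fe; split; last 2 first.
- exact: lifts_bounded_bilinear.
- exact: hfej.
split=> // yc a u v; symmetry.
apply: (completion_lift_unique hjY hW hWc (is_linear_add a (hfel u) (hfel v))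
  (bounded_map_add a hW (hfeb u) (hfeb v)) (hfel _) (hfeb _)) => y.
by rewrite !hfej (hf.2 y).
Qed.

End BilinearExtension.

Section CompletedTensorProduct.
Variables (V : comPzRingType) (pi : V).
Variables (R S T : algType V) (t : R -> S -> T).
Variables (BR : (R -> Prop) -> Prop) (BS : (S -> Prop) -> Prop).
Variables (C1 : algType V) (BC1 : (C1 -> Prop) -> Prop) (j1 : T -> C1).
Variables (Rb : algType V) (BRb : (Rb -> Prop) -> Prop) (jR : R -> Rb).
Variables (Sb : algType V) (BSb : (Sb -> Prop) -> Prop) (jS : S -> Sb).
Variables (T2 : algType V) (t2 : Rb -> Sb -> T2).
Variables (C2 : algType V) (BC2 : (C2 -> Prop) -> Prop) (j2 : T2 -> C2).
Hypotheses (ht : is_tensor_algebra t) (ht2 : is_tensor_algebra t2).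
Hypotheses (hBR : is_alg_bornology BR) (hBS : is_alg_bornology BS).
Hypotheses (hj1 : is_alg_completion pi (tensor_bornology BR BS t) BC1 j1)
  (hjR : is_alg_completion pi BR BRb jR) (hjS : is_alg_completion pi BS BSb jS)
  (hj2 : is_alg_completion pi (tensor_bornology BRb BSb t2) BC2 j2).

Let cj1 := hj1.2.2.
Let cj2 := hj2.2.2.
Let cjR := hjR.2.2.
Let cjS := hjS.2.2.
Let hC1 := completion_convex cj1.
Let hC2 := completion_convex cj2.
Let hC1c := completion_complete cj1.
Let hC2c := completion_complete cj2.
Let hRb := completion_convex cjR.
Let hSb := completion_convex cjS.
Let hT2 := tensor_bounded_bilinear (t := t2) hRb hSb.
Let hT2c := tensor_bornology_convex t2 BRb BSb.

Lemma completed_tensor_ext_unique (W : lmodType V) (BW : (W -> Prop) -> Prop) (F1 F2 : C1 -> W) :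
  is_convex_bornology BW -> is_complete pi BW ->
  is_linear F1 -> bounded_map BC1 BW F1 -> is_linear F2 -> bounded_map BC1 BW F2 ->
  (forall r s, F1 (j1 (t r s)) = F2 (j1 (t r s))) -> F1 =1 F2.
Proof.
move=> hW hWc hF1 hb1 hF2 hb2 e.
apply: (completion_lift_unique cj1 hW hWc hF1 hb1 hF2 hb2).
exact: (tensor_linear_eq ht.1 (is_linear_comp (completion_linear cj1) hF1)
  (is_linear_comp (completion_linear cj1) hF2) e).
Qed.

(* Density of R (x) S in the completion of Rb (x) Sb: extend the agreement first in the
   second variable through S -> Sb, then in the first through R -> Rb. *)
Lemma completed_tensor2_ext_unique (W : lmodType V) (BW : (W -> Prop) -> Prop) (F1 F2 : C2 -> W) :
  is_convex_bornology BW -> is_complete pi BW ->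
  is_linear F1 -> bounded_map BC2 BW F1 -> is_linear F2 -> bounded_map BC2 BW F2 ->
  (forall r s, F1 (j2 (t2 (jR r) (jS s))) = F2 (j2 (t2 (jR r) (jS s)))) -> F1 =1 F2.
Proof.
move=> hW hWc hF1 hb1 hF2 hb2 e.
have hj2F (F : C2 -> W) : is_linear F -> is_linear (fun z => F (j2 z)).
  exact: is_linear_comp (completion_linear cj2).
have hj2Fb (F : C2 -> W) :
    bounded_map BC2 BW F -> bounded_map (tensor_bornology BRb BSb t2) BW (fun z => F (j2 z)).
  exact: bounded_map_comp hW (completion_bounded cj2).
have e1 r : (fun sb => F1 (j2 (t2 (jR r) sb))) =1 (fun sb => F2 (j2 (t2 (jR r) sb))).
  apply: (completion_lift_unique cjS hW hWc _ _ _ _ (e r)).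
  - exact: is_linear_comp (tensor_linear_r ht2.1 _) (hj2F _ hF1).
  - exact: (bounded_map_comp hW (bounded_bilinear_r hRb hT2c _ hT2) (hj2Fb _ hb1)).
  - exact: is_linear_comp (tensor_linear_r ht2.1 _) (hj2F _ hF2).
  - exact: (bounded_map_comp hW (bounded_bilinear_r hRb hT2c _ hT2) (hj2Fb _ hb2)).
have e2 sb : (fun rb => F1 (j2 (t2 rb sb))) =1 (fun rb => F2 (j2 (t2 rb sb))).
  apply: (completion_lift_unique cjR hW hWc _ _ _ _ (e1^~ sb)).
  - exact: is_linear_comp (tensor_linear_l ht2.1 _) (hj2F _ hF1).
  - exact: (bounded_map_comp hW (bounded_bilinear_l hSb hT2c _ hT2) (hj2Fb _ hb1)).
  - exact: is_linear_comp (tensor_linear_l ht2.1 _) (hj2F _ hF2).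
  - exact: (bounded_map_comp hW (bounded_bilinear_l hSb hT2c _ hT2) (hj2Fb _ hb2)).
apply: (completion_lift_unique cj2 hW hWc hF1 hb1 hF2 hb2).
by apply: (tensor_linear_eq ht2.1 (hj2F _ hF1) (hj2F _ hF2)) => rb sb; rewrite (e2 sb).
Qed.

Lemma completed_tensor_map : exists phi : C1 -> C2, [/\ is_linear phi, bounded_map BC1 BC2 phi
  & forall r s, phi (j1 (t r s)) = j2 (t2 (jR r) (jS s))].
Proof.
have hf : is_bilinear (fun r s => t2 (jR r) (jS s)).
  split=> [r | s]; first exact: is_linear_comp (completion_linear cjS) (tensor_linear_r ht2.1 _).
  exact: is_linear_comp (completion_linear cjR) (tensor_linear_l ht2.1 _).
have [h hh hht] := tensor_lift ht.1 hf.
have hj2h := is_linear_comp hh (completion_linear cj2).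
have hfb : bounded_bilinear BR BS BC2 (fun r s => j2 (t2 (jR r) (jS s))).
  apply: (bounded_bilinear_comp hC2 (completion_bounded cj2)).
  exact: (bounded_bilinear_precomp hT2c (completion_bounded cjR) (completion_bounded cjS) hT2).
have hphi0 : bounded_map (tensor_bornology BR BS t) BC2 (fun z => j2 (h z)).
  by apply: (tensor_lift_bounded hBR.1 hBS.1 ht.1 hC2 hfb hj2h) => r s; rewrite hht.
have [phi [hphi hphib hphij]] := completion_lift cj1 hC2 hC2c hj2h hphi0.
by exists phi; split => // r s; rewrite hphij hht.
Qed.

(* Extend (r, s) |-> r (x) s in C1 first to R x Sb, then to Rb x Sb, and linearize over
   Rb (x) Sb. *)
Lemma completed_tensor_inverse : exists psi : C2 -> C1, [/\ is_linear psi, bounded_map BC2 BC1 psi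
  & forall r s, psi (j2 (t2 (jR r) (jS s))) = j1 (t r s)].
Proof.
have hf : is_bilinear (fun r s => j1 (t r s)).
  split=> [r | s]; first exact: is_linear_comp (tensor_linear_r ht.1 _) (completion_linear cj1).
  exact: is_linear_comp (tensor_linear_l ht.1 _) (completion_linear cj1).
have hfb : bounded_bilinear BR BS BC1 (fun r s => j1 (t r s)).
  exact: (bounded_bilinear_comp hC1 (completion_bounded cj1) (tensor_bounded_bilinear hBR.1 hBS.1)).
have [b [hb hbb hbj]] := bounded_bilinear_extend_r hBR.1 hBS.1 cjS hC1 hC1c hf hfb.
have [g [hg hgb hgj]] := bounded_bilinear_extend_r hSb hBR.1 cjR hC1 hC1c
  (f := fun sb r => b r sb) (conj hb.2 hb.1) (bounded_bilinear_swap hC1 hbb).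
have [k hk hkt] := tensor_lift ht2.1 (f := fun rb sb => g sb rb) (conj hg.2 hg.1).
have hkb := tensor_lift_bounded hRb hSb ht2.1 hC1 (bounded_bilinear_swap hC1 hgb) hk hkt.
have [psi [hpsi hpsib hpsij]] := completion_lift cj2 hC1 hC1c hk hkb.
by exists psi; split => // r s; rewrite hpsij hkt hgj hbj.
Qed.

Lemma completed_tensor_map_mul (phi : C1 -> C2) :
  is_linear phi -> bounded_map BC1 BC2 phi ->
  (forall r s, phi (j1 (t r s)) = j2 (t2 (jR r) (jS s))) ->
  forall x y, phi (x * y) = phi x * phi y.
Proof.
move=> hphi hphib hphij.
have hmul r s r' s' : phi (j1 (t r s) * j1 (t r' s')) = phi (j1 (t r s)) * phi (j1 (t r' s')).
  rewrite -(alg_homM hj1.2.1) tensor_mul // !hphij (alg_homM hjR.2.1) (alg_homM hjS.2.1).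
  by rewrite -tensor_mul // (alg_homM hj2.2.1).
have hmul1 r s y : phi (j1 (t r s) * y) = phi (j1 (t r s)) * phi y.
  apply: (completed_tensor_ext_unique hC2 hC2c
    (is_linear_comp (lmul_is_linear _) hphi) (bounded_map_comp hC2 (lmul_bounded _ hj1.1) hphib)
    (is_linear_comp hphi (lmul_is_linear _)) (bounded_map_comp hC2 hphib (lmul_bounded _ hj2.1))).
  exact: hmul.
move=> x y; move: x; apply: (completed_tensor_ext_unique hC2 hC2c
  (is_linear_comp (rmul_is_linear _) hphi) (bounded_map_comp hC2 (rmul_bounded _ hj1.1) hphib)
  (is_linear_comp hphi (rmul_is_linear _)) (bounded_map_comp hC2 hphib (rmul_bounded _ hj2.1))).
by move=> r s; apply: hmul1.
Qed.

Theorem completed_tensor_iso : exists (phi : C1 -> C2) (psi : C2 -> C1),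
  is_alg_hom phi /\ cancel phi psi /\ cancel psi phi /\
  bounded_map BC1 BC2 phi /\ bounded_map BC2 BC1 psi /\
  (forall r s, phi (j1 (t r s)) = j2 (t2 (jR r) (jS s))).
Proof.
have [phi [hphi hphib hphij]] := completed_tensor_map.
have [psi [hpsi hpsib hpsij]] := completed_tensor_inverse.
exists phi, psi; do ![split] => //.
- rewrite -(alg_hom1 hj1.2.1) -(tensor_one ht) hphij (alg_hom1 hjR.2.1) (alg_hom1 hjS.2.1).
  by rewrite tensor_one // (alg_hom1 hj2.2.1).
- exact: completed_tensor_map_mul.
- apply: (completed_tensor_ext_unique hC1 hC1c (is_linear_comp hphi hpsi)
    (bounded_map_comp hC1 hphib hpsib) (fun _ _ _ => erefl) (bounded_map_id hC1)).
  by move=> r s; rewrite hphij hpsij.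
- apply: (completed_tensor2_ext_unique hC2 hC2c (is_linear_comp hpsi hphi)
    (bounded_map_comp hC2 hpsib hphib) (fun _ _ _ => erefl) (bounded_map_id hC2)).
  by move=> r s; rewrite hpsij hphij.
Qed.

End CompletedTensorProduct.

Theorem mainTheorem13 (V : idomainType) (pi : V) (eps : Rdefinitions.R)
  (hdvr : is_dvr_uniformizer pi) (hVcomplete : is_pi_adically_complete_ring pi)
  (heps0 : Rlt 0 eps)
  (heps1 : Rlt eps 1)
  (R S : algType V) (BR : (R -> Prop) -> Prop) (BS : (S -> Prop) -> Prop)
  (hBR : is_alg_bornology BR) (hBS : is_alg_bornology BS)
  (T : algType V) (t : R -> S -> T) (ht : is_tensor_algebra t) :
  (forall A : T -> Prop,
     lg_bornology pi eps (tensor_bornology BR BS t) A <->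
     tensor_bornology (lg_bornology pi eps BR) (lg_bornology pi eps BS) t A)
  /\
  (forall (C1 : algType V) (BC1 : (C1 -> Prop) -> Prop) (j1 : T -> C1)
          (Rb : algType V) (BRb : (Rb -> Prop) -> Prop) (jR : R -> Rb)
          (Sb : algType V) (BSb : (Sb -> Prop) -> Prop) (jS : S -> Sb)
          (T2 : algType V) (t2 : Rb -> Sb -> T2)
          (C2 : algType V) (BC2 : (C2 -> Prop) -> Prop) (j2 : T2 -> C2),
     is_alg_completion pi (lg_bornology pi eps (tensor_bornology BR BS t)) BC1 j1 ->
     is_alg_completion pi (lg_bornology pi eps BR) BRb jR ->
     is_alg_completion pi (lg_bornology pi eps BS) BSb jS ->
     is_tensor_algebra t2 ->
     is_alg_completion pi (tensor_bornology BRb BSb t2) BC2 j2 ->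
     exists (phi : C1 -> C2) (psi : C2 -> C1),
       is_alg_hom phi /\ cancel phi psi /\ cancel psi phi /\
       bounded_map BC1 BC2 phi /\ bounded_map BC2 BC1 psi /\
       (forall r s, phi (j1 (t r s)) = j2 (t2 (jR r) (jS s)))).
Proof.
have hlg := lg_tensor_bornologyE pi heps0 heps1 ht hBR hBS.
split; first exact: hlg.
move=> C1 BC1 j1 Rb BRb jR Sb BSb jS T2 t2 C2 BC2 j2.
have -> : lg_bornology pi eps (tensor_bornology BR BS t) =
          tensor_bornology (lg_bornology pi eps BR) (lg_bornology pi eps BS) t.
  by apply/funext => A; apply/propext.
move=> hj1 hjR hjS ht2 hj2.
exact: (completed_tensor_iso ht ht2 (lg_bornology_alg pi eps BR) (lg_bornology_alg pi eps BS)
  hj1 hjR hjS hj2).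
Qed.
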